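(* For every $0<\varepsilon<\frac{\pi^2}{2}$ and every $x\in\mathbb T^d$, $$\frac{1}{(2\pi\varepsilon)^{d/2}}e^{-\frac{\mathrm{dist}(x,0_d)^2}{2\varepsilon}}\le\mathcal K_\varepsilon(x)\le2^{d+1}e^{5d}\cdot\frac{1}{(2\pi\varepsilon)^{d/2}}e^{-\frac{\mathrm{dist}(x,0_d)^2}{2\varepsilon}}.$$
   Context: $\mathbb T^d=\mathbb R^d/2\pi\mathbb Z^d$ with $\mathrm{dist}(x,y)=\min_{k\in\mathbb Z^d}\|x-y-2\pi k\|$, and $\mathcal K_\varepsilon(x)=(2\pi\varepsilon)^{-d/2}\sum_{k\in\mathbb Z^d}e^{-\|x-2\pi k\|^2/(2\varepsilon)}$ is the Gaussian (heat) kernel on $\mathbb T^d$. *)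

From HB Require Import structures.
From mathcomp Require Import all_boot all_order all_algebra.
From mathcomp Require Import all_classical all_reals all_analysis.
Set Implicit Arguments. Unset Strict Implicit. Unset Printing Implicit Defensive.
Import Order.TTheory GRing.Theory Num.Theory.
Import numFieldNormedType.Exports.
Local Open Scope classical_set_scope.
Local Open Scope ring_scope.

(* Points of T^d = R^d / 2 pi Z^d are represented by any representative
   x : 'I_d -> R; lattice vectors k in Z^d are {ffun 'I_d -> int}. *)

Definition sqnorm_shift (R : realType) (d : nat) (x : 'I_d -> R)
  (k : {ffun 'I_d -> int}) : R :=
  \sum_(i < d) (x i - 2 * pi * (k i)%:~R) ^+ 2.

(* dist(x, 0_d) = min_{k in Z^d} || x - 2 pi k || (the min exists, so it is the inf) *)
Definition tdist0 (R : realType) (d : nat) (x : 'I_d -> R) : R :=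
  inf [set Num.sqrt (sqnorm_shift x k) | k in [set: {ffun 'I_d -> int}]].

Definition gauss_const (R : realType) (d : nat) (eps : R) : R :=
  (2 * pi * eps) `^ (- (d%:R / 2)).

Definition heatK (R : realType) (d : nat) (eps : R) (x : 'I_d -> R) : \bar R :=
  ((gauss_const d eps)%:E *
   \esum_(k in [set: {ffun 'I_d -> int}])
      (expR (- sqnorm_shift x k / (2 * eps)))%:E)%E.

Arguments sqnorm_shift {R} d x k.
Arguments tdist0 {R} d x.
Arguments gauss_const {R} d eps.
Arguments heatK {R} d eps x.

From HB Require Import structures.
From mathcomp Require Import all_boot all_order all_algebra.
From mathcomp Require Import all_classical all_reals all_analysis.
From mathcomp Require Import ring lra zify.
Import Order.TTheory GRing.Theory Num.Theory.
Import numFieldNormedType.Exports.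
Local Open Scope classical_set_scope.
Local Open Scope ring_scope.

(** Let [k0] be the lattice point nearest to [x], so that every coordinate
   [y_i = x_i - 2 pi k0_i] lies in [[-pi, pi]] and [dist(x, 0)^2 = sum_i y_i^2].
   The lower bound is the single term [k = k0] of the lattice sum.  For the
   upper bound write [k = k0 + j]: for [|y| <= pi],
   [(y - 2 pi j)^2 >= y^2 + 4 pi^2 (|j|^2 - |j|) >= y^2 + 8 eps (|j| - 1)]
   as soon as [eps <= pi^2 / 2], so the term of index [k] is at most the term
   of index [k0] times [prod_i e^(4 - 4|j_i|) <= prod_i e^4 2^(-|j_i|)].
   These weights sum to [3 e^4] over each coordinate, and
   [(3 e^4)^d <= 2^(d+1) e^(5d)]. *)

Section OneCoordinate.
Variable R : realType.
Implicit Types (eps y : R) (j : int).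

Lemma natr_sqr_sub_ge0 (n : nat) : 0 <= n%:R ^+ 2 - n%:R :> R.
Proof. by case: n => [|n]; rewrite ?subrr // subr_ge0 expr2 ler_peMl // ler1n. Qed.

Lemma sqr_sub_2pi_int_ge {y} j : `|y| <= pi ->
  y ^+ 2 + 4 * pi ^+ 2 * ((`|j|%N)%:R ^+ 2 - (`|j|%N)%:R)
    <= (y - 2 * pi * j%:~R) ^+ 2.
Proof.
move=> ypi; have pi0 : 0 < pi :> R := pi_gt0 R.
have nj : (`|j|%N)%:R = `|j%:~R| :> R by rewrite natr_absz intr_norm.
have jy : j%:~R * y <= pi * (`|j|%N)%:R.
  rewrite nj mulrC; apply: le_trans (ler_norm _) _.
  by rewrite normrM ler_wpM2r.
have -> : (`|j|%N)%:R ^+ 2 = (j%:~R : R) ^+ 2 by rewrite nj real_normK ?num_real.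
nra.
Qed.

Lemma sqr_le_sqr_sub_2pi_int y j : `|y| <= pi -> y ^+ 2 <= (y - 2 * pi * j%:~R) ^+ 2.
Proof.
move=> ypi; apply: le_trans (sqr_sub_2pi_int_ge j ypi); rewrite lerDl.
by rewrite mulr_ge0 ?natr_sqr_sub_ge0 // mulr_ge0 // sqr_ge0.
Qed.

Definition int_weight j : R := expR 4 * 2^-1 ^+ `|j|%N.

Lemma int_weight_ge0 j : 0 <= int_weight j.
Proof. by rewrite mulr_ge0 ?expR_ge0 // exprn_ge0 // invr_ge0. Qed.

Lemma expR_le_int_weight j : expR (4 - 4 * (`|j|%N)%:R) <= int_weight j.
Proof.
rewrite /int_weight expRD ler_wpM2l ?expR_ge0 // -mulNr expRM_natr.
rewrite lerXn2r ?nnegrE ?expR_ge0 ?invr_ge0 // expRN lef_pV2 ?posrE ?expR_gt0 //.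
by have := expR_ge1Dx (4 : R); lra.
Qed.

Lemma gauss_sub_2pi_int_le eps y j : 0 < eps -> eps <= pi ^+ 2 / 2 -> `|y| <= pi ->
  expR (- (y - 2 * pi * j%:~R) ^+ 2 / (2 * eps))
    <= expR (- y ^+ 2 / (2 * eps)) * int_weight j.
Proof.
move=> eps0 epspi ypi; apply: le_trans (ler_wpM2l (expR_ge0 _) (expR_le_int_weight j)).
rewrite -expRD ler_expR.
have := sqr_sub_2pi_int_ge j ypi; have := natr_sqr_sub_ge0 `|j|%N.
set n := (`|j|%N)%:R; set z := (y - _) ^+ 2 => n0 hz.
have hlin : y ^+ 2 + 8 * eps * (n - 1) <= z.
  apply: le_trans hz; rewrite lerD2l.
  have : 0 <= (n - 1) ^+ 2 by exact: sqr_ge0.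
  nra.
rewrite ler_pdivrMr; last lra.
rewrite mulrDl -mulrA mulVf ?mulr1; last lra.
nra.
Qed.

End OneCoordinate.

Section NearestLatticePoint.
Variables (R : realType) (d : nat) (x : 'I_d -> R).

Definition nearest_lattice : {ffun 'I_d -> int} :=
  [ffun i => Num.floor (x i / (2 * pi) + 2^-1)].

Lemma norm_sub_nearest_lattice_le i : `|x i - 2 * pi * (nearest_lattice i)%:~R| <= pi.
Proof.
have pi0 : 0 < pi :> R := pi_gt0 R.
rewrite ffunE; set u := x i / (2 * pi) + 2^-1.
have := floor_le u; have := floorD1_gt u; rewrite intrD.
set f := (Num.floor u)%:~R => uf fu.
have -> : x i = 2 * pi * u - pi by rewrite /u; field; lra.
rewrite ler_norml; apply/andP; split; nra.
Qed.

Lemma sqnorm_shift_nearest_le k :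
  sqnorm_shift d x nearest_lattice <= sqnorm_shift d x k.
Proof.
apply: ler_sum => i _.
have -> : x i - 2 * pi * (k i)%:~R = x i - 2 * pi * (nearest_lattice i)%:~R
    - 2 * pi * (k i - nearest_lattice i)%:~R by rewrite intrB; ring.
exact: sqr_le_sqr_sub_2pi_int (norm_sub_nearest_lattice_le i).
Qed.

Lemma sqnorm_shift_ge0 k : 0 <= sqnorm_shift d x k.
Proof. by apply: sumr_ge0 => i _; exact: sqr_ge0. Qed.

Lemma tdist0_sqr : tdist0 d x ^+ 2 = sqnorm_shift d x nearest_lattice.
Proof.
suff -> : tdist0 d x = Num.sqrt (sqnorm_shift d x nearest_lattice).
  by rewrite sqr_sqrtr // sqnorm_shift_ge0.
rewrite /tdist0; set S := [set _ | _ in _]; set m := Num.sqrt _.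
have Sm : S m by exists nearest_lattice.
have lbm : lbound S m.
  by move=> _ [k _ <-]; rewrite ler_sqrt ?sqnorm_shift_ge0 ?sqnorm_shift_nearest_le.
apply/le_anti/andP; split; first exact: ge_inf (ex_intro _ m lbm) _ Sm.
exact: lb_le_inf (ex_intro _ m Sm) lbm.
Qed.

Lemma expR_sqnorm_shift (eps : R) k :
  expR (- sqnorm_shift d x k / (2 * eps))
    = \prod_(i < d) expR (- (x i - 2 * pi * (k i)%:~R) ^+ 2 / (2 * eps)).
Proof. by rewrite -expR_sum /sqnorm_shift -sumrN mulr_suml. Qed.

Lemma gauss_shift_nearest_le (eps : R) (j : {ffun 'I_d -> int}) :
  0 < eps -> eps <= pi ^+ 2 / 2 ->
  expR (- sqnorm_shift d x [ffun i => j i + nearest_lattice i] / (2 * eps))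
    <= expR (- sqnorm_shift d x nearest_lattice / (2 * eps))
       * \prod_(i < d) int_weight R (j i).
Proof.
move=> eps0 epspi; rewrite !expR_sqnorm_shift -big_split /=.
apply: ler_prod => i _; rewrite expR_ge0 ffunE intrD /=.
have -> : x i - 2 * pi * ((j i)%:~R + (nearest_lattice i)%:~R)
    = x i - 2 * pi * (nearest_lattice i)%:~R - 2 * pi * (j i)%:~R by ring.
exact: gauss_sub_2pi_int_le (norm_sub_nearest_lattice_le i).
Qed.

End NearestLatticePoint.
Arguments nearest_lattice {R d} x.

Lemma fsbig_setT_fin (R : Type) (idx : R) (op : Monoid.com_law idx)
    (T : finType) (F : T -> R) :
  \big[op/idx]_(i \in [set: T]) F i = \big[op/idx]_(i : T) F i.
Proof.
rewrite fsbig_finite /=; last exact: finite_finset.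
apply: perm_big; apply: uniq_perm; rewrite ?finmap.fset_uniq ?index_enum_uniq //.
move=> i; rewrite in_fset_set ?inE ?mem_index_enum; last exact: finite_finset.
exact/mem_set.
Qed.

(* [bool * 'I_N.+1] enumerates the integers of [[-N-1, N]]. *)
Definition int_of_signed {N : nat} (p : bool * 'I_N.+1) : int :=
  if p.1 then Posz p.2 else Negz p.2.

Lemma int_of_signed_inj N : injective (@int_of_signed N).
Proof. by move=> [[] a] [[] b] //= [/val_inj ->]. Qed.

Definition lattice_of_box {d N : nat} (f : {ffun 'I_d -> bool * 'I_N.+1}) :
  {ffun 'I_d -> int} := [ffun i => int_of_signed (f i)].

Lemma lattice_of_box_inj d N : injective (@lattice_of_box d N).
Proof.
move=> f g /ffunP fg; apply/ffunP => i; apply: int_of_signed_inj.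
by have := fg i; rewrite !ffunE.
Qed.

Lemma finite_lattice_sub_box {d} {X : set {ffun 'I_d -> int}} : finite_set X ->
  exists N, X `<=` range (@lattice_of_box d N).
Proof.
move=> finX; set s := finmap.enum_fset (fset_set X).
exists (\max_(j <- s) \max_(i < d) `|j i|)%N => j Xj.
have jN i : (`|j i| <= \max_(j <- s) \max_(i < d) `|j i|)%N.
  apply: leq_trans (@leq_bigmax _ (fun i => `|j i|%N) i) _.
  by apply: leq_bigmax_seq; rewrite // in_fset_set // inE.
exists [ffun i => if j i is Negz n then (false, inord n) else (true, inord `|j i|)] => //.
apply/ffunP => i; rewrite !ffunE; move: (jN i).
by case: (j i) => n /= nN; rewrite /int_of_signed /= inordK //; lia.
Qed.

Section LatticeWeightSum.
Variable R : realType.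

Lemma sum_half_pow_le n : \sum_(t < n) (2^-1 : R) ^+ t <= 2.
Proof.
under eq_bigr do rewrite -[_ ^+ _]mul1r.
have := @geometric_le_lim R n 1 2^-1; rewrite /series /= big_mkord.
rewrite (_ : 1 - 2^-1 = 2^-1 :> R) ?mul1r ?invrK; last lra.
by apply; rewrite ?invr_gt0 ?gtr0_norm ?invf_lt1 ?ltr1n.
Qed.

Lemma sum_int_weight_signed_le N :
  \sum_(p : bool * 'I_N.+1) int_weight R (int_of_signed p) <= 3 * expR 4.
Proof.
rewrite -(pair_bigA _ (fun b t => int_weight R (int_of_signed (b, t)))) big_bool /=.
rewrite /int_weight -!mulr_sumr -mulrDr mulrC ler_wpM2r ?expR_ge0 //= /int_of_signed /=.
under [X in _ + X]eq_bigr do rewrite exprS.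
by rewrite -mulr_sumr; have := sum_half_pow_le N.+1; lra.
Qed.

Lemma sum_prod_int_weight_box d N :
  \sum_(f : {ffun 'I_d -> bool * 'I_N.+1})
      \prod_(i < d) int_weight R (lattice_of_box f i)
    = (\sum_(p : bool * 'I_N.+1) int_weight R (int_of_signed p)) ^+ d.
Proof.
under eq_bigr do under eq_bigr do rewrite ffunE.
rewrite -(bigA_distr_bigA (fun _ p => int_weight R (int_of_signed p))).
by rewrite prodr_const card_ord.
Qed.

Lemma fsum_prod_int_weight_le d (X : set {ffun 'I_d -> int}) : finite_set X ->
  \sum_(j \in X) \prod_(i < d) int_weight R (j i) <= (3 * expR 4) ^+ d.
Proof.
move=> finX; have [N XB] := finite_lattice_sub_box finX.
have finB : finite_set (range (@lattice_of_box d N)) by exact/finite_image/finite_finset.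
have w0 j : 0 <= \prod_(i < d) int_weight R (j i).
  by apply: prodr_ge0 => i _; exact: int_weight_ge0.
rewrite -lee_fin -fsumEFin //.
apply: le_trans (lee_fsum_nneg_subset finX finB _ _) _.
- by move=> j; rewrite !inE => /XB.
- by move=> j _; rewrite lee_fin.
rewrite fsbig_image; last by move=> f g _ _; exact: lattice_of_box_inj.
rewrite fsumEFin ?lee_fin; last exact: finite_finset.
rewrite fsbig_setT_fin sum_prod_int_weight_box lerXn2r ?sum_int_weight_signed_le //.
- by rewrite nnegrE; apply: sumr_ge0 => p _; exact: int_weight_ge0.
- by rewrite nnegrE mulr_ge0 ?expR_ge0.
Qed.

End LatticeWeightSum.

Lemma esum_gauss_shift_le {R : realType} {d : nat} {eps : R} (x : 'I_d -> R) :
  0 < eps -> eps <= pi ^+ 2 / 2 ->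
  (\esum_(k in [set: {ffun 'I_d -> int}]) (expR (- sqnorm_shift d x k / (2 * eps)))%:E
    <= (expR (- sqnorm_shift d x (nearest_lattice x) / (2 * eps))
        * (3 * expR 4) ^+ d)%:E)%E.
Proof.
move=> eps0 epspi; set k0 := nearest_lattice x.
set E := expR (- sqnorm_shift d x k0 / (2 * eps)).
rewrite (reindex_esum setT setT (fun j : {ffun 'I_d -> int} => [ffun i => j i + k0 i])).
  apply: (@le_trans _ _ (\esum_(j in [set: {ffun 'I_d -> int}])
                            (E * \prod_(i < d) int_weight R (j i))%:E)).
    by apply: le_esum => j _; rewrite lee_fin; exact: gauss_shift_nearest_le.
  apply: ge_ereal_sup => _ [X [finX _] <-].
  rewrite fsumEFin // lee_fin -mulr_fsumr ler_wpM2l ?expR_ge0 //.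
  exact: fsum_prod_int_weight_le.
rewrite setTT_bijective.
by exists (fun k : {ffun 'I_d -> int} => [ffun i => k i - k0 i]) => j;
  apply/ffunP => i; rewrite !ffunE ?addrK ?subrK.
Qed.

Lemma three_expR4_pow_le (R : realType) (d : nat) :
  (3 * expR 4) ^+ d <= 2 ^+ d.+1 * expR (5 * d%:R) :> R.
Proof.
have e2 : 2 <= expR 1 :> R by have := expR_ge1Dx (1 : R); lra.
have e5 : expR 5 = expR 4 * expR 1 :> R by rewrite -expRD; congr expR; lra.
rewrite expRM_natr exprS -mulrA -exprMn.
apply: (@le_trans _ _ ((2 * expR 5) ^+ d)).
  by rewrite lerXn2r ?nnegrE ?mulr_ge0 ?expR_ge0 // e5; have := expR_gt0 (4 : R); nra.
by rewrite ler_peMl ?exprn_ge0 ?mulr_ge0 ?expR_ge0 ?ler1n.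
Qed.

Theorem propositionC1 (R : realType) (d : nat) (eps : R) (x : 'I_d -> R) :
  0 < eps -> eps < pi ^+ 2 / 2 ->
  ((gauss_const d eps * expR (- tdist0 d x ^+ 2 / (2 * eps)))%:E <= heatK d eps x
   /\ heatK d eps x <=
      (2 ^+ d.+1 * expR (5 * d%:R) *
        (gauss_const d eps * expR (- tdist0 d x ^+ 2 / (2 * eps))))%:E)%E.
Proof.
move=> eps0 /ltW epspi; rewrite tdist0_sqr /heatK.
have C0 : 0 <= gauss_const d eps by exact: powR_ge0.
split.
  rewrite EFinM lee_wpmul2l ?lee_fin //.
  apply: esum_ge; exists [set nearest_lattice x]; last by rewrite fsbig_set1.
  by split; [exact: finite_set1 | ].
apply: (le_trans (lee_wpmul2l _ (esum_gauss_shift_le x eps0 epspi))).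
  by rewrite lee_fin.
rewrite -EFinM lee_fin [leLHS]mulrA [leRHS]mulrC ler_wpM2l ?mulr_ge0 ?expR_ge0 //.
exact: three_expR4_pow_le.
Qed.
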